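(* Let $A$ be an associative $k$-algebra. Then $\mathfrak{B}(A)$ is an associative algebra, and the maps $(x,a)\mapsto x*a$, $(a,x)\mapsto a*x$ ($x\in\mathfrak{B}(A)$, $a\in A$) form an action of $\mathfrak{B}(A)$ on $A$ in the category of associative algebras if and only if $A$ satisfies Condition 2. If this is the case, $\mathfrak{B}(A)=\mathrm{Actor}(A)$.
   Context: $k$ is a commutative ring with unit; associative algebras are not assumed unital. An action of an associative algebra $B$ on an associative algebra $A$ is a pair of bilinear maps $B\times A\to A$, $(b,a)\mapsto b*a$, and $A\times B\to A$, $(a,b)\mapsto a*b$, such that for all $a,a_1,a_2\in A$, $b,b_1,b_2\in B$: $(b_1*b_2)*a=b_1*(b_2*a)$; $a*(b_1*b_2)=(a*b_1)*b_2$; $(b_1*a)*b_2=b_1*(a*b_2)$; $b*(a_1*a_2)=(b*a_1)*a_2$; $(a_1*a_2)*b=a_1*(a_2*b)$; $a_1*(b*a_2)=(a_1*b)*a_2$. A crossed module of associative algebras is an algebra homomorphism $\partial:A\to G$ with an action of $G$ on $A$ such that $\partial(g*a)=g*\partial a$, $\partial(a*g)=\partial a*g$, $\partial a*a'=a*a'$, $a'*\partial a=a'*a$. An actor of $A$ is a crossed module $\partial:A\to\mathrm{Actor}(A)$ such that for every associative algebra $C$ with an action on $A$ there is a unique homomorphism $\varphi:C\to\mathrm{Actor}(A)$ with $\varphi(c)*a=c*a$ and $a*\varphi(c)=a*c$ for all $c\in C$, $a\in A$. Condition 2: for any two associative algebras $B,C$ acting on $A$, $c*(a*b)=(c*a)*b$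 for all $a\in A$, $b\in B$, $c\in C$. Construction of $\mathfrak{B}(A)$: let $(B_j)_{j\in J}$ range over all associative algebras equipped with an action on $A$ (one index per action). For $b\in B_j$ let $\mathbf b$ be the pair of $k$-linear maps $A\to A$, $a\mapsto\mathbf b*a:=b*a$ and $a\mapsto a*\mathbf b:=a*b$. On such pairs $x$ define addition and scalar multiplication componentwise, and the product by $(x*y)*a=x*(y*a)$ and $a*(x*y)=(a*x)*y$. $\mathfrak{B}(A)$ is the set of pairs obtained from all the $\mathbf b$ by iterating these operations; $A\to\mathfrak{B}(A)$ sends $a$ to the pair $(a*-,-*a)$. *)

From HB Require Import structures.
From mathcomp Require Import all_boot all_algebra.
From mathcomp Require Import boolp functions.
Set Implicit Arguments.
Unset Strict Implicit.
Unset Printing Implicit Defensive.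
Import GRing.Theory.
Local Open Scope ring_scope.

Record nalg (k : comPzRingType) := NAlg {
  nalg_sort :> lmodType k;
  nmul : nalg_sort -> nalg_sort -> nalg_sort;
  nmul_linl : forall y, linear (fun x => nmul x y);
  nmul_linr : forall x, linear (nmul x);
  nmulA : associative nmul }.
Arguments nmul {k} n _ _.

Section Defs.
Variable k : comPzRingType.

Definition nalg_hom (B C : nalg k) (f : B -> C) : Prop :=
  linear f /\ forall x y, f (nmul B x y) = nmul C (f x) (f y).

Record is_action (B A : nalg k) (l : B -> A -> A) (r : A -> B -> A) : Prop := {
  act_l_linA : forall b, linear (l b);
  act_l_linB : forall a, linear (fun b => l b a);
  act_r_linA : forall b, linear (fun a => r a b);
  act_r_linB : forall a, linear (r a);
  act_ax1 : forall b1 b2 a, l (nmul B b1 b2) a = l b1 (l b2 a);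
  act_ax2 : forall a b1 b2, r a (nmul B b1 b2) = r (r a b1) b2;
  act_ax3 : forall b1 a b2, r (l b1 a) b2 = l b1 (r a b2);
  act_ax4 : forall b a1 a2, l b (nmul A a1 a2) = nmul A (l b a1) a2;
  act_ax5 : forall a1 a2 b, r (nmul A a1 a2) b = nmul A a1 (r a2 b);
  act_ax6 : forall a1 b a2, nmul A a1 (l b a2) = nmul A (r a1 b) a2 }.

Record is_crossed_module (A G : nalg k) (d : A -> G)
    (l : G -> A -> A) (r : A -> G -> A) : Prop := {
  cm_hom : nalg_hom d;
  cm_action : is_action l r;
  cm_ax1 : forall g a, d (l g a) = nmul G g (d a);
  cm_ax2 : forall a g, d (r a g) = nmul G (d a) g;
  cm_ax3 : forall a a', l (d a) a' = nmul A a a';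
  cm_ax4 : forall a a', r a' (d a) = nmul A a' a }.

Definition is_actor (A G : nalg k) (d : A -> G)
    (l : G -> A -> A) (r : A -> G -> A) : Prop :=
  is_crossed_module d l r /\
  forall (C : nalg k) (lc : C -> A -> A) (rc : A -> C -> A),
    is_action lc rc ->
    exists! phi : C -> G,
      [/\ nalg_hom phi, (forall c a, l (phi c) a = lc c a) &
          (forall c a, r a (phi c) = rc a c)].

Definition Condition2 (A : nalg k) : Prop :=
  forall (B C : nalg k) (lB : B -> A -> A) (rB : A -> B -> A)
         (lC : C -> A -> A) (rC : A -> C -> A),
    is_action lB rB -> is_action lC rC ->
    forall (a : A) (b : B) (c : C), lC c (rB a b) = rB (lC c a) b.

(* Elements are pairs x = (x.1, x.2) of maps A -> A, with x.1 a = x * a *)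
(* and x.2 a = a * x.                                                  *)
Section BA.
Variable A : nalg k.

Definition pairs := ((A -> A) * (A -> A))%type.

(* product: (x*y)*a = x*(y*a),  a*(x*y) = (a*x)*y *)
Definition pmul (x y : pairs) : pairs := (x.1 \o y.1, y.2 \o x.2).

Inductive inB : pairs -> Prop :=
| inB_gen (B : nalg k) (l : B -> A -> A) (r : A -> B -> A) (b : B) :
    is_action l r -> inB (l b, fun a => r a b)
| inB_add x y : inB x -> inB y -> inB (x + y)
| inB_scale (c : k) x : inB x -> inB (c *: x)
| inB_mul x y : inB x -> inB y -> inB (pmul x y).

Definition inBb : {pred pairs} := fun x => `[< inB x >].

Lemma self_action : is_action (nmul A) (nmul A).
Proof.
split=> *; rewrite ?nmulA //; [exact: nmul_linr | exact: nmul_linl |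
  exact: nmul_linl | exact: nmul_linr].
Qed.

Lemma inBb_submod : submod_closed inBb.
Proof.
split.
- apply/asboolP.
  have -> : (0 : pairs) = 0 *: (nmul A 0, fun a => nmul A a 0) by rewrite scale0r.
  exact/inB_scale/inB_gen/self_action.
- move=> c x y /asboolP Hx /asboolP Hy; apply/asboolP.
  exact/inB_add/Hy/inB_scale.
Qed.

HB.instance Definition _ := GRing.isSubmodClosed.Build k pairs inBb inBb_submod.

Record Bcar := BCar { bval : pairs; bvalP : bval \in inBb }.
HB.instance Definition _ := [isSub for bval].
HB.instance Definition _ := gen_eqMixin Bcar.
HB.instance Definition _ := gen_choiceMixin Bcar.
HB.instance Definition _ := [SubChoice_isSubLmodule of Bcar by <:].

Lemma bval_inB (x : Bcar) : inB (bval x).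
Proof. exact/asboolP/bvalP. Qed.

Lemma inB_lin x : inB x -> linear x.1 /\ linear x.2.
Proof.
elim=> {x} [B l r b H | x y _ [Hx1 Hx2] _ [Hy1 Hy2] | c x _ [Hx1 Hx2]
           | x y _ [Hx1 Hx2] _ [Hy1 Hy2]] /=.
  by split=> [|c u v]; [exact: (act_l_linA H) | exact: (act_r_linA H b)].
  split=> c u v /=; rewrite !addrfctE ?Hx1 ?Hy1 ?Hx2 ?Hy2 scalerDr !addrA;
    congr (_ + _); rewrite -!addrA; congr (_ + _); exact: addrC.
  by split=> c' u v /=; rewrite !scalrfctE ?Hx1 ?Hx2 scalerDr !scalerA mulrC.
by split=> c u v /=; rewrite ?Hy1 ?Hx1 ?Hx2 ?Hy2.
Qed.

Definition Bmul (x y : Bcar) : Bcar :=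
  BCar (introT (asboolP _) (inB_mul (bval_inB x) (bval_inB y))).

Lemma bval_inj : injective bval.
Proof. exact: val_inj. Qed.

Lemma Bmul_linl y : linear (fun x => Bmul x y).
Proof.
move=> c u v; apply: bval_inj => /=.
have [_ L] := inB_lin (bval_inB y).
case: (bval u) (bval v) (bval y) L => [u1 u2] [v1 v2] [y1 y2] /= L.
by rewrite /pmul /=; congr pair; apply/funext => a /=; rewrite ?L.
Qed.

Lemma Bmul_linr x : linear (Bmul x).
Proof.
move=> c u v; apply: bval_inj => /=.
have [L _] := inB_lin (bval_inB x).
case: (bval u) (bval v) (bval x) L => [u1 u2] [v1 v2] [x1 x2] /= L.
by rewrite /pmul /=; congr pair; apply/funext => a /=; rewrite ?L.
Qed.

Lemma BmulA : associative Bmul.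
Proof. by move=> x y z; apply: bval_inj. Qed.

Definition BA : nalg k := NAlg Bmul_linl Bmul_linr BmulA.

Definition BA_l (x : BA) (a : A) : A := (bval x).1 a.
Definition BA_r (a : A) (x : BA) : A := (bval x).2 a.

Definition BA_d (a : A) : BA :=
  BCar (introT (asboolP _) (inB_gen a self_action)).

End BA.
End Defs.

From mathcomp Require Import all_boot all_algebra.
From mathcomp Require Import boolp functions.
Set Implicit Arguments.
Unset Strict Implicit.
Unset Printing Implicit Defensive.
Import GRing.Theory.
Local Open Scope ring_scope.

(* Every element of B(A) is built from generators b by sums, scalar multiples
   and products, and five of the six action identities survive these
   operations, so they hold on B(A) for free.  The remaining one,
   (x*a)*y = x*(a*y), is linear in x and in y; a double induction reduces it
   to generators x = c, y = b, where it is exactly Condition 2, and read on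
   generators it gives Condition 2 back.  For the actor property the
   homomorphism C -> B(A) is c |-> (c*-, -*c), unique because an element of
   B(A) is determined by its two maps. *)

Section NalgTheory.
Variables (k : comPzRingType) (A : nalg k).

Lemma nmulDl a : {morph nmul A ^~ a : x y / x + y}.
Proof. exact: (GRing.semilinear_linear (nmul_linl a)).2. Qed.

Lemma nmulZl a c : {morph nmul A ^~ a : x / c *: x}.
Proof. exact: (GRing.semilinear_linear (nmul_linl a)).1. Qed.

Lemma nmulDr a : {morph nmul A a : x y / x + y}.
Proof. exact: (GRing.semilinear_linear (nmul_linr a)).2. Qed.

Lemma nmulZr a c : {morph nmul A a : x / c *: x}.
Proof. exact: (GRing.semilinear_linear (nmul_linr a)).1. Qed.

End NalgTheory.

Section GeneratedPairs.
Variables (k : comPzRingType) (A : nalg k).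
Implicit Types x y : pairs A.

Lemma inB_lmulA x : inB x -> forall a1 a2, x.1 (nmul A a1 a2) = nmul A (x.1 a1) a2.
Proof.
elim=> {x} [B l r b H | x y _ Hx _ Hy | c x _ Hx | x y _ Hx _ Hy] a1 a2 /=.
- exact: act_ax4 H _ _ _.
- by rewrite !addrfctE Hx Hy nmulDl.
- by rewrite !scalrfctE Hx nmulZl.
- by rewrite Hy Hx.
Qed.

Lemma inB_rmulA x : inB x -> forall a1 a2, x.2 (nmul A a1 a2) = nmul A a1 (x.2 a2).
Proof.
elim=> {x} [B l r b H | x y _ Hx _ Hy | c x _ Hx | x y _ Hx _ Hy] a1 a2 /=.
- exact: act_ax5 H _ _ _.
- by rewrite !addrfctE Hx Hy nmulDr.
- by rewrite !scalrfctE Hx nmulZr.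
- by rewrite Hx Hy.
Qed.

Lemma inB_mul_balanced x : inB x ->
  forall a1 a2, nmul A a1 (x.1 a2) = nmul A (x.2 a1) a2.
Proof.
elim=> {x} [B l r b H | x y _ Hx _ Hy | c x _ Hx | x y _ Hx _ Hy] a1 a2 /=.
- exact: act_ax6 H _ _ _.
- by rewrite !addrfctE nmulDr nmulDl Hx Hy.
- by rewrite !scalrfctE nmulZr nmulZl Hx.
- by rewrite Hx Hy.
Qed.

(* [mid_assoc x y] is the identity (x*a)*y = x*(a*y). *)
Definition mid_assoc x y : Prop := forall a, y.2 (x.1 a) = x.1 (y.2 a).

Definition gen_pair (B : nalg k) (l : B -> A -> A) (r : A -> B -> A) (b : B) :
  pairs A := (l b, fun a => r a b).

Lemma mid_assoc_inBl y : linear y.2 ->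
  (forall (B : nalg k) l r (b : B), is_action l r -> mid_assoc (gen_pair l r b) y) ->
  forall x, inB x -> mid_assoc x y.
Proof.
move=> /GRing.semilinear_linear [yZ yD] Hgen x; elim=> {x}
  [B l r b H | x x' _ Hx _ Hx' | c x _ Hx | x x' _ Hx _ Hx'] a /=.
- exact: Hgen H a.
- by rewrite !addrfctE yD Hx Hx'.
- by rewrite !scalrfctE yZ Hx.
- by rewrite Hx Hx'.
Qed.

Lemma mid_assoc_inBr x : linear x.1 ->
  (forall (B : nalg k) l r (b : B), is_action l r -> mid_assoc x (gen_pair l r b)) ->
  forall y, inB y -> mid_assoc x y.
Proof.
move=> /GRing.semilinear_linear [xZ xD] Hgen y; elim=> {y}
  [B l r b H | y y' _ Hy _ Hy' | c y _ Hy | y y' _ Hy _ Hy'] a /=.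
- exact: Hgen H a.
- by rewrite !addrfctE xD Hy Hy'.
- by rewrite !scalrfctE xZ Hy.
- by rewrite Hy Hy'.
Qed.

Lemma Condition2_mid_assoc : Condition2 A ->
  forall x y, inB x -> inB y -> mid_assoc x y.
Proof.
move=> C2 x y Hx Hy; apply: (mid_assoc_inBr (inB_lin Hx).1 _ Hy) => B l r b HB.
apply: mid_assoc_inBl Hx => [|C l' r' c HC a]; first exact: act_r_linA HB b.
exact: esym (C2 _ _ _ _ _ _ HB HC a b c).
Qed.

End GeneratedPairs.

Section BAaction.
Variables (k : comPzRingType) (A : nalg k).

Definition BA_of (C : nalg k) (lc : C -> A -> A) (rc : A -> C -> A)
    (HC : is_action lc rc) (c : C) : BA A :=
  BCar (introT (asboolP _) (inB_gen c HC)).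

Lemma BA_actionP : is_action (@BA_l k A) (@BA_r k A) <->
  forall x y : BA A, mid_assoc (bval x) (bval y).
Proof.
split=> [H x y a | Hmid]; first exact: act_ax3 H x a y.
split=> //.
- by move=> x; exact: (inB_lin (bval_inB x)).1.
- by move=> x; exact: (inB_lin (bval_inB x)).2.
- by move=> x a y; apply: Hmid.
- by move=> x a1 a2; exact: inB_lmulA (bval_inB x) a1 a2.
- by move=> a1 a2 x; exact: inB_rmulA (bval_inB x) a1 a2.
- by move=> a1 x a2; exact: inB_mul_balanced (bval_inB x) a1 a2.
Qed.

Lemma BA_action_Condition2 : is_action (@BA_l k A) (@BA_r k A) <-> Condition2 A.
Proof.
rewrite BA_actionP; split=> [Hmid B C lB rB lC rC HB HC a b c | C2 x y].
  exact: esym (Hmid (BA_of HC c) (BA_of HB b) a).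
exact: Condition2_mid_assoc C2 _ _ (bval_inB x) (bval_inB y).
Qed.

Lemma BA_ext (x y : BA A) :
  BA_l x =1 BA_l y -> (forall a, BA_r a x = BA_r a y) -> x = y.
Proof.
move=> El Er; apply: bval_inj; rewrite [bval x]surjective_pairing.
by rewrite [bval y]surjective_pairing; congr pair; apply/funext.
Qed.

Lemma BA_of_hom (C : nalg k) (lc : C -> A -> A) (rc : A -> C -> A)
    (HC : is_action lc rc) : nalg_hom (BA_of HC).
Proof.
split=> [c u v | u v]; apply: BA_ext => a /=.
- exact: act_l_linB HC a c u v.
- exact: act_r_linB HC a c u v.
- exact: act_ax1 HC u v a.
- exact: act_ax2 HC a u v.
Qed.

Lemma BA_d_lmul (x : BA A) a : BA_d (BA_l x a) = nmul (BA A) x (BA_d a).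
Proof.
apply: BA_ext => u /=; rewrite /BA_l /BA_r /=.
- exact: esym (inB_lmulA (bval_inB x) a u).
- exact: inB_mul_balanced (bval_inB x) u a.
Qed.

Lemma BA_d_rmul a (x : BA A) : BA_d (BA_r a x) = nmul (BA A) (BA_d a) x.
Proof.
apply: BA_ext => u /=; rewrite /BA_l /BA_r /=.
- exact: esym (inB_mul_balanced (bval_inB x) a u).
- exact: esym (inB_rmulA (bval_inB x) u a).
Qed.

Lemma BA_crossed_module : Condition2 A ->
  is_crossed_module (@BA_d k A) (@BA_l k A) (@BA_r k A).
Proof.
move=> C2; split=> //.
- exact: BA_of_hom (self_action A).
- exact/BA_action_Condition2.
- exact: BA_d_lmul.
- exact: BA_d_rmul.
Qed.

Lemma BA_universal (C : nalg k) (lc : C -> A -> A) (rc : A -> C -> A) :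
  is_action lc rc ->
  exists! phi : C -> BA A,
    [/\ nalg_hom phi, (forall c a, BA_l (phi c) a = lc c a) &
        (forall c a, BA_r a (phi c) = rc a c)].
Proof.
move=> HC; exists (BA_of HC); split; first by split=> //; exact: BA_of_hom.
move=> phi [_ El Er]; apply/funext => c.
by apply: BA_ext => a; rewrite ?El ?Er.
Qed.

End BAaction.

Theorem proposition4p6 (k : comPzRingType) (A : nalg k) :
  (is_action (@BA_l k A) (@BA_r k A) <-> Condition2 A) /\
  (Condition2 A -> is_actor (@BA_d k A) (@BA_l k A) (@BA_r k A)).
Proof.
split; first exact: BA_action_Condition2.
by move=> C2; split; [exact: BA_crossed_module | exact: BA_universal].
Qed.
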